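(* Let $c\neq o$ be vertices such that there is exactly one directed path $\pi$ from $c$ to $o$, and let $\delta=\delta_{co}$ be its length. Let $\bar L$ be the $(N-\delta-1)\times(N-\delta-1)$ principal submatrix of $L$ obtained by deleting the rows and columns indexed by the $\delta+1$ vertices of $\pi$. Then $$e_o^T\operatorname{adj}(sI+L)e_c=\vartheta(\pi)\,\det\big(sI_{N-\delta-1}+\bar L\big),$$ where the determinant of an empty matrix is $1$. Consequently, the roots $-\gamma_i$ of $h(s)=e_o^T\operatorname{adj}(sI+L)e_c$ are exactly the eigenvalues of $-\bar L$.
   Context: $\mathcal G$ is a weighted directed graph on $\{1,\dots,N\}$ with adjacency matrix $A=[a_{ij}]$. Here $a_{ij}>0$ if there is an arc from $j$ to $i$, of weight $a_{ij}$, and $a_{ij}=0$ otherwise (no self-loops). The Laplacian is $L=D-A$ with $D=\mathrm{diag}(\sum_j a_{ij})$. A directed path from $u$ to $w$ is a sequence of pairwise distinct vertices $u=v_0,\dots,v_\ell=w$ with an arc from $v_k$ to $v_{k+1}$ for each $k$. Its length is $\ell$ and its weight $\vartheta(\pi)$ is the product of its arc weights. $\delta_{uw}$ is the length of a shortest directed path from $u$ to $w$. $e_i$ is the $i$-th canonical basis vector, and $\operatorname{adj}$ denotes the adjugate matrix. *)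

From HB Require Import structures.
From mathcomp Require Import all_boot all_order all_algebra.
Set Implicit Arguments. Unset Strict Implicit. Unset Printing Implicit Defensive.
Import Order.TTheory GRing.Theory Num.Theory.
Local Open Scope ring_scope.

Section Graph.
Variables (R : numClosedFieldType) (N : nat) (A : 'M[R]_N).

Definition laplacian : 'M[R]_N :=
  \matrix_(i, j) ((i == j)%:R * (\sum_(k < N) A i k) - A i j).

Definition arc (u w : 'I_N) : bool := 0 < A w u.

Definition is_dpath (u w : 'I_N) (q : seq 'I_N) : bool :=
  [&& path arc u q, last u q == w & uniq (u :: q)].

Fixpoint pweight (u : 'I_N) (q : seq 'I_N) : R :=
  if q is v :: q' then A v u * pweight v q' else 1.

Definition sIL : 'M[{poly R}]_N := 'X%:M + map_mx polyC laplacian.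

Definition offpath (u : 'I_N) (q : seq 'I_N) : {set 'I_N} := ~: [set v in u :: q].

Definition Lbar (u : 'I_N) (q : seq 'I_N) : 'M[R]_#|offpath u q| :=
  \matrix_(i, j) laplacian (enum_val i) (enum_val j).

End Graph.

(* Expanding an off-diagonal entry (o, c) of adj(sI + L) along column c, whose
   off-diagonal entries are the negated weights a_kc of the arcs leaving c, gives
   adj(sI + L)_oc = sum_k a_kc adj((sI + L) with vertex c removed)_ok.
   Iterating on principal submatrices, by induction on the vertex set S: the entry
   vanishes when no directed path from c to o stays in S, and when exactly one does,
   only the next vertex of that path contributes at each step, so the weights of its
   arcs accumulate until a diagonal entry is reached, which is the principal minor of
   sI + L on S minus the path.  The roots of h are then those of det(sI + Lbar), as
   the path weight is positive. *)

From Pilot Require Import Defs.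
From HB Require Import structures.
From mathcomp Require Import all_boot all_order all_algebra all_fingroup.
Import Order.TTheory GRing.Theory Num.Theory.
Local Open Scope ring_scope.
Set Implicit Arguments. Unset Strict Implicit. Unset Printing Implicit Defensive.

Section Cofactors.
Variables (T : comPzRingType) (n : nat).
Implicit Types (M : 'M[T]_n) (S : {set 'I_n}) (i j k : 'I_n).

(* Principal submatrices are kept at full size, padded with the identity, so that
   removing vertices does not change the matrix type. *)
Definition restrict_mx S M : 'M[T]_n :=
  \matrix_(a, b) if (a \in S) && (b \in S) then M a b else (a == b)%:R.

Definition set_col M j (v : 'I_n -> T) : 'M[T]_n :=
  \matrix_(a, b) if b == j then v a else M a b.

Definition unit_vec i : 'I_n -> T := fun a => (a == i)%:R.

Lemma restrict_mxT M : restrict_mx setT M = M.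
Proof. by apply/matrixP => a b; rewrite mxE !inE. Qed.

Lemma restrict_mxI S S' M :
  restrict_mx S (restrict_mx S' M) = restrict_mx (S :&: S') M.
Proof.
apply/matrixP => a b; rewrite !mxE !inE.
by case: (a \in S) (b \in S) (a \in S') (b \in S') => [] [] [] [].
Qed.

Lemma det_unit_col M i j : (forall a, M a j = unit_vec i a) -> \det M = cofactor M i j.
Proof.
move=> Mj; rewrite (expand_det_col M j) (bigD1 i) //= big1 ?addr0.
  by rewrite Mj /unit_vec eqxx mul1r.
by move=> a nai; rewrite Mj /unit_vec (negPf nai) mul0r.
Qed.

Lemma cofactor_set_col M j v i : cofactor (set_col M j v) i j = cofactor M i j.
Proof.
rewrite /cofactor; congr (_ * \det _); apply/matrixP => a b.
by rewrite !mxE eq_sym (negPf (neq_lift _ _)).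
Qed.

Lemma cofactor_set_col_unit M i j : cofactor M i j = \det (set_col M j (unit_vec i)).
Proof.
by rewrite (det_unit_col (i := i) (j := j)) ?cofactor_set_col // => a; rewrite mxE eqxx.
Qed.

Lemma adj_set_col M i j : \adj M i j = \det (set_col M i (unit_vec j)).
Proof. by rewrite mxE cofactor_set_col_unit. Qed.

Lemma det_unit_col_eq M1 M2 i j :
  (forall a, M1 a j = unit_vec i a) -> (forall a, M2 a j = unit_vec i a) ->
  (forall a b, a != i -> M1 a b = M2 a b) -> \det M1 = \det M2.
Proof.
move=> M1j M2j M12; rewrite (det_unit_col M1j) (det_unit_col M2j) /cofactor.
by congr (_ * \det _); apply/matrixP => a b; rewrite !mxE M12 // eq_sym neq_lift.
Qed.

Lemma det_xcol M i j : i != j -> \det (xcol i j M) = - \det M.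
Proof.
by move=> nij; rewrite xcolE det_mulmx det_perm odd_tperm nij expr1 mulrN1.
Qed.

Lemma adj_diag M i : \adj M i i = \det (restrict_mx [set~ i] M).
Proof.
rewrite (expand_det_row _ i) (bigD1 i) //= big1 ?addr0.
  rewrite !mxE !inE eqxx mul1r /cofactor; congr (_ * \det _).
  by apply/matrixP => a b; rewrite !mxE !inE !(eq_sym _ i) !neq_lift.
by move=> b nbi; rewrite !mxE !inE eqxx /= eq_sym (negPf nbi) mul0r.
Qed.

(* Expand the Cramer determinant of [\adj M i j] along column [j]; swapping columns
   [i] and [j] turns each cofactor into an entry of the adjugate of [M] with row and
   column [j] replaced by those of the identity. *)
Lemma adj_offdiag M i j : i != j ->
  \adj M i j = - \sum_(k | k != j) M k j * \adj (restrict_mx [set~ j] M) i k.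
Proof.
move=> nij; have nji : j != i by rewrite eq_sym.
set Mi := set_col M i (unit_vec j).
rewrite adj_set_col (expand_det_col _ j) (bigD1 j) //= -sumrN.
have -> : cofactor Mi j j = 0.
  rewrite cofactor_set_col_unit -det_tr (determinant_alternate nij) // => b.
  by rewrite !mxE; case: eqP => [->|]; rewrite ?eqxx ?(negPf nij).
rewrite mulr0 add0r; apply: eq_bigr => k nkj.
rewrite mxE (negPf nji) -mulrN; congr (_ * _).
rewrite cofactor_set_col_unit adj_set_col; apply/eqP.
rewrite -eqr_oppLR -(det_xcol _ nij); apply/eqP.
apply: (det_unit_col_eq (i := j) (j := j)) => [a|a|a b naj].
- by rewrite /xcol !mxE tpermR (negPf nij) eqxx.
- by rewrite !mxE (negPf nji) !inE eqxx andbF.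
rewrite /xcol !mxE !inE; case: tpermP => [->|->|/eqP nbi /eqP nbj].
- by rewrite !eqxx.
- by rewrite eqxx (negPf nij) (negPf nji) eqxx andbF.
- by rewrite (negPf nbi) (negPf nbj) naj.
Qed.

Lemma adj_restrict_mx_diag S M i :
  \adj (restrict_mx S M) i i = \det (restrict_mx (S :\ i) M).
Proof. by rewrite adj_diag restrict_mxI setIC -setDE. Qed.

Lemma adj_restrict_mx_offdiag S M i j : i != j -> j \in S ->
  \adj (restrict_mx S M) i j =
  - \sum_(k in S :\ j) M k j * \adj (restrict_mx (S :\ j) M) i k.
Proof.
move=> nij jS; rewrite adj_offdiag // restrict_mxI setIC -setDE.
congr (- _); rewrite big_mkcond [RHS]big_mkcond; apply: eq_bigr => k _.
rewrite mxE !inE jS andbT; case: (k == j) => //=.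
by case: (k \in S); rewrite ?mul0r.
Qed.

Lemma det_mxsub_perm m (e : m = n) (f : 'I_m -> 'I_n) M :
  injective f -> \det (mxsub f f M) = \det M.
Proof.
move=> finj; subst m; pose p := perm finj.
have -> : mxsub f f M = row_perm p (col_perm p M).
  by apply/matrixP => a b; rewrite !mxE !permE.
by rewrite row_permE col_permE !det_mulmx !det_perm odd_permV [\det M * _]mulrC signrMK.
Qed.

Definition split_enum S : 'I_(#|S| + #|~: S|) -> 'I_n :=
  fun x => match split x with inl a => enum_val a | inr b => enum_val b end.
Arguments split_enum : clear implicits.

Lemma split_enum_lshift S a : split_enum S (lshift #|~: S| a) = enum_val a.
Proof. by rewrite /split_enum -[lshift _ _]/(unsplit (inl _ a)) unsplitK. Qed.

Lemma split_enum_rshift S b : split_enum S (rshift #|S| b) = enum_val b.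
Proof. by rewrite /split_enum -[rshift _ _]/(unsplit (inr _ b)) unsplitK. Qed.

Lemma enum_val_setC S (b : 'I_#|~: S|) : enum_val b \notin S.
Proof. by have := enum_valP b; rewrite inE. Qed.

Lemma enum_val_setC_neq S (a : 'I_#|S|) (b : 'I_#|~: S|) : enum_val a != enum_val b.
Proof. by apply: contraNneq (enum_val_setC b) => <-; apply: enum_valP. Qed.

Lemma split_enum_inj S : injective (split_enum S).
Proof.
move=> x y; case: (split_ordP x) => a ->; case: (split_ordP y) => b ->;
  rewrite ?split_enum_lshift ?split_enum_rshift => eab.
- by rewrite (enum_val_inj eab).
- by have := enum_val_setC_neq a b; rewrite eab eqxx.
- by have := enum_val_setC_neq b a; rewrite eab eqxx.
- by rewrite (enum_val_inj eab).
Qed.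

Lemma det_restrict_mx S M :
  \det (restrict_mx S M) = \det (mxsub (enum_val (A := S)) (enum_val (A := S)) M).
Proof.
have card_split : (#|S| + #|~: S| = n)%N by rewrite cardsC card_ord.
rewrite -(det_mxsub_perm card_split _ (@split_enum_inj S)).
have -> : mxsub (split_enum S) (split_enum S) (restrict_mx S M) =
    block_mx (mxsub (enum_val (A := S)) (enum_val (A := S)) M) 0 0 1%:M.
  apply/matrixP => x y; case: (split_ordP x) => a ->; case: (split_ordP y) => b ->;
    rewrite ?block_mxEul ?block_mxEur ?block_mxEdl ?block_mxEdr !mxE
            ?split_enum_lshift ?split_enum_rshift.
  - by rewrite !enum_valP.
  - by rewrite (negPf (enum_val_setC b)) andbF (negPf (enum_val_setC_neq a b)).
  - by rewrite (negPf (enum_val_setC a)) eq_sym (negPf (enum_val_setC_neq b a)).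
  - by rewrite (negPf (enum_val_setC a)) (inj_eq enum_val_inj).
by rewrite det_ublock det1 mulr1.
Qed.
End Cofactors.

Section DirectedPaths.
Variables (R : numClosedFieldType) (N : nat) (A : 'M[R]_N).
Hypothesis A_ge0 : forall i j, 0 <= A i j.
Implicit Types (S : {set 'I_N}) (i j k u w : 'I_N) (q : seq 'I_N).

Definition dpath_in S u w q := is_dpath A u w q && all (fun x => x \in S) (u :: q).

Local Notation sIL_on S := (restrict_mx S (sIL A)).

Lemma dpath_inT u w q : dpath_in setT u w q = is_dpath A u w q.
Proof.
by rewrite /dpath_in; case: is_dpath; rewrite // andTb; apply/allP => x; rewrite inE.
Qed.

Lemma dpath_in_nil S u : u \in S -> dpath_in S u u [::].
Proof. by move=> uS; rewrite /dpath_in /is_dpath /= eqxx uS. Qed.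

Lemma dpath_in_endpoints S u w q : dpath_in S u w q -> (u \in S) && (w \in S).
Proof.
case/andP=> /and3P[_ /eqP <- _] /allP qS.
by rewrite !qS ?mem_head ?mem_last.
Qed.

Lemma dpath_in_loop S u q : dpath_in S u u q -> q = [::].
Proof.
case: q => [//|v q] /andP[/and3P[_ /eqP lq /andP[uq _]] _].
by move: uq; rewrite -[X in X \notin _]lq /= mem_last.
Qed.

Lemma dpath_in_cons S j k i q : j \in S -> Defs.arc A j k ->
  dpath_in (S :\ j) k i q -> dpath_in S j i (k :: q).
Proof.
move=> jS ajk /andP[/and3P[pq lq uq] /allP qS].
have jq : j \notin k :: q by apply/negP => /qS; rewrite !inE eqxx.
apply/andP; split; first by rewrite /is_dpath cons_uniq jq uq /= ajk pq lq.
by apply/allP => x; rewrite in_cons => /predU1P[-> | /qS /setD1P[]].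
Qed.

Lemma dpath_in_consE S j i k q :
  dpath_in S j i (k :: q) -> Defs.arc A j k /\ dpath_in (S :\ j) k i q.
Proof.
case/andP=> /and3P[+ + +] /allP qS; rewrite [path _ _ _]/= [last _ _]/= cons_uniq.
move=> /andP[ajk pq] lq /andP[jq uq]; split=> //.
rewrite /dpath_in /is_dpath pq lq uq.
apply/allP => x xq; rewrite in_setD1 qS ?andbT; last by rewrite in_cons xq orbT.
by apply: contraNneq jq => <-.
Qed.

Lemma nonarc_weight0 j k : ~~ Defs.arc A j k -> A k j = 0.
Proof.
move=> /negPf njk; have := A_ge0 k j.
by rewrite le0r -/(Defs.arc A j k) njk orbF => /eqP.
Qed.

Lemma pweight_gt0 u q : path (Defs.arc A) u q -> 0 < pweight A u q.
Proof.
by elim: q u => [|v q IHq] u /=; [rewrite ltr01 | case/andP=> auv /IHq; apply: mulr_gt0].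
Qed.

Lemma sIL_offdiag k j : k != j -> sIL A k j = - (A k j)%:P.
Proof.
by move=> nkj; rewrite !mxE (negPf nkj) mulr0n mul0r !add0r polyCN.
Qed.

Lemma adj_sIL_on_offdiag S i j : i != j -> j \in S ->
  \adj (sIL_on S) i j = \sum_(k in S :\ j) (A k j)%:P * \adj (sIL_on (S :\ j)) i k.
Proof.
move=> nij jS; rewrite adj_restrict_mx_offdiag // -sumrN.
by apply: eq_bigr => k /setD1P[nkj _]; rewrite sIL_offdiag // mulNr opprK.
Qed.

Lemma adj_sIL_on_nopath S i j : i \in S -> j \in S ->
  (forall q, ~~ dpath_in S j i q) -> \adj (sIL_on S) i j = 0.
Proof.
have [m] := ubnP #|S|; elim: m S i j => // m IH S i j /ltnSE leSm iS jS nopath.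
have [eij | nij] := eqVneq i j.
  by have := nopath [::]; rewrite eij dpath_in_nil.
rewrite adj_sIL_on_offdiag //; apply: big1 => k /setD1P[nkj kS].
have [ajk | /nonarc_weight0 ->] := boolP (Defs.arc A j k); last by rewrite mul0r.
rewrite (IH (S :\ j)) ?mulr0 ?in_setD1 ?nij ?nkj //.
- by move: leSm; rewrite (cardsD1 j S) jS.
- by move=> q; apply: contra (nopath (k :: q)); apply: dpath_in_cons.
Qed.

Lemma adj_sIL_on_unique_dpath S i j q :
  dpath_in S j i q -> (forall q', dpath_in S j i q' -> q' = q) ->
  \adj (sIL_on S) i j = pweight A j q *: \det (sIL_on (S :\: [set x in j :: q])).
Proof.
have [m] := ubnP #|S|; elim: m S i j q => // m IH S i j q /ltnSE leSm pq uniq_q.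
have /andP[jS iS] := dpath_in_endpoints pq.
have [eij | nij] := eqVneq i j.
  move: pq; rewrite eij => /dpath_in_loop ->.
  rewrite scale1r adj_restrict_mx_diag; congr (\det (restrict_mx _ _)).
  by apply/setP => x; rewrite !inE.
case: q pq uniq_q => [|k q] pq uniq_q.
  by move: pq => /andP[/and3P[_ /eqP /= eji _] _]; rewrite eji eqxx in nij.
have [ajk pq'] := dpath_in_consE pq.
have /andP[kS' _] := dpath_in_endpoints pq'.
have leS'm : (#|S :\ j| < m)%N by move: leSm; rewrite (cardsD1 j S) jS.
rewrite adj_sIL_on_offdiag // (bigD1 k) //= big1 ?addr0.
  rewrite (IH _ _ _ q leS'm pq'); last first.
    by move=> q' /(dpath_in_cons jS ajk) /uniq_q [].
  rewrite mul_polyC scalerA; congr (_ *: \det (restrict_mx _ _)).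
  by apply/setP => x; rewrite !inE; case: (x == j); case: (x == k); case: (x \in q).
move=> k' /andP[/setD1P[nk'j k'S] nk'k].
have [ajk' | /nonarc_weight0 ->] := boolP (Defs.arc A j k'); last by rewrite mul0r.
rewrite adj_sIL_on_nopath ?mulr0 ?in_setD1 ?nij ?nk'j //.
move=> q'; apply/negP => /(dpath_in_cons jS ajk') /uniq_q [ek'k _].
by rewrite ek'k eqxx in nk'k.
Qed.

End DirectedPaths.

Theorem theorem3 (R : numClosedFieldType) (N : nat) (A : 'M[R]_N)
  (Anneg : forall i j, 0 <= A i j) (Adiag : forall i, A i i = 0)
  (c o : 'I_N) (q : seq 'I_N) (hco : c != o)
  (hpath : is_dpath A c o q)
  (huniq : forall q', is_dpath A c o q' -> q' = q) :
  let h := (\adj (sIL A)) o c in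
  h = pweight A c q *: \det ('X%:M + map_mx polyC (Lbar A c q))
  /\ (forall z : R, root h z <-> eigenvalue (- Lbar A c q) z).
Proof.
(* Neither [hco] nor [Adiag] is needed: the case [c = o] is covered by
   [adj_sIL_on_unique_dpath], and self-loops cancel in [laplacian]. *)
move=> h.
have hE : h = pweight A c q *: \det ('X%:M + map_mx polyC (Lbar A c q)).
  rewrite /h -(restrict_mxT (sIL A)).
  rewrite (adj_sIL_on_unique_dpath Anneg (q := q)) ?dpath_inT //; last first.
    by move=> q'; rewrite dpath_inT; apply: huniq.
  rewrite setTD det_restrict_mx; congr (_ *: \det _).
  by apply/matrixP => i j; rewrite !mxE (inj_eq enum_val_inj).
split=> // z.
have wq_gt0 : 0 < pweight A c q by apply: pweight_gt0; case/and3P: hpath.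
rewrite eigenvalue_root_char /char_poly /char_poly_mx map_mxN opprK hE.
by rewrite /root hornerZ mulf_eq0 (negPf (lt0r_neq0 wq_gt0)).
Qed.
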